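(* Let $T$ be a completely non-unitary contraction on a Hilbert space $\mathcal{H}$ with finite-dimensional defect spaces such that $\mathcal{D}_T\subseteq\mathcal{D}_{T^*}$ and $\dim\mathcal{D}_T=1$. Then $T$ is hyponormal.
   Context: For a contraction $T$ on $\mathcal{H}$, the defect spaces are $\mathcal{D}_T=\overline{(I-T^*T)^{1/2}\mathcal{H}}$ and $\mathcal{D}_{T^*}=\overline{(I-TT^* )^{1/2}\mathcal{H}}$. A contraction is completely non-unitary if it has no nonzero reducing subspace on which it is unitary. $T$ is hyponormal if $T^*T\ge TT^*$. *)

From mathcomp Require Import all_boot all_order all_algebra complex reals.
Set Implicit Arguments. Unset Strict Implicit. Unset Printing Implicit Defensive.
Import Order.TTheory GRing.Theory Num.Theory.
Local Open Scope ring_scope.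

Section Hilbert.
Variables (R : realType) (V : lmodType R[i]) (ip : V -> V -> R[i]).

Definition hnorm (x : V) : R := Num.sqrt (complex.Re (ip x x)).

Definition cauchy_seq (u : nat -> V) : Prop :=
  forall eps : R, 0 < eps -> exists N : nat,
    forall m n : nat, (N <= m)%N -> (N <= n)%N -> hnorm (u m - u n) < eps.

Definition converges_to (u : nat -> V) (l : V) : Prop :=
  forall eps : R, 0 < eps -> exists N : nat,
    forall n : nat, (N <= n)%N -> hnorm (u n - l) < eps.

Definition hilbert_space : Prop :=
  [/\ forall (a : R[i]) (x y z : V), ip (a *: x + y) z = a * ip x z + ip y z,
      forall x y : V, ip y x = Num.conj (ip x y),
      forall x : V, 0 <= ip x x,
      forall x : V, ip x x = 0 -> x = 0
    & forall u : nat -> V, cauchy_seq u -> exists l, converges_to u l].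

Definition is_adjoint (A A' : V -> V) : Prop :=
  forall x y : V, ip (A x) y = ip x (A' y).

Definition contraction (A : V -> V) : Prop :=
  forall x : V, hnorm (A x) <= hnorm x.

Definition closure_of (M : V -> Prop) : V -> Prop :=
  fun x => forall eps : R, 0 < eps -> exists a, M a /\ hnorm (x - a) < eps.

Definition range_of (S : V -> V) : V -> Prop := fun y => exists x, y = S x.

Definition is_pos_sqrt (P S : V -> V) : Prop :=
  [/\ is_adjoint S S, forall x, 0 <= ip (S x) x & forall x, S (S x) = P x].

Definition defect_space (A A' : V -> V) : V -> Prop :=
  fun x => exists S, is_pos_sqrt (fun v => v - A' (A v)) S /\
                     closure_of (range_of S) x.

Definition subspace_dim (M : V -> Prop) (n : nat) : Prop :=
  exists b : 'I_n -> V,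
    (forall x, M x <-> exists c : 'I_n -> R[i], x = \sum_(k < n) c k *: b k) /\
    (forall c : 'I_n -> R[i], \sum_(k < n) c k *: b k = 0 -> forall k, c k = 0).

Definition finite_dimensional (M : V -> Prop) : Prop := exists n, subspace_dim M n.

Definition closed_subspace (M : V -> Prop) : Prop :=
  [/\ M 0, forall (a : R[i]) x y, M x -> M y -> M (a *: x + y)
    & forall x, closure_of M x -> M x].

Definition unitary_reducing (A A' : V -> V) (M : V -> Prop) : Prop :=
  [/\ closed_subspace M,
      forall x, M x -> M (A x) /\ M (A' x)
    & forall x, M x -> A' (A x) = x /\ A (A' x) = x].

Definition completely_non_unitary (A A' : V -> V) : Prop :=
  forall M, unitary_reducing A A' M -> forall x, M x -> x = 0.

Definition hyponormal (A A' : V -> V) : Prop :=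
  forall x : V, 0 <= ip (A' (A x) - A (A' x)) x.

End Hilbert.

(* The defect operator I - T^*T is a rank-one positive operator supported on
   the line spanned by a unit vector e, so T is isometric on e^⊥, and the
   inclusion D_T ⊆ D_T^* makes every fixed vector of TT^* orthogonal to e.
   From this, T^*Te = ‖Te‖² e, and for every x, writing r for the component
   of T^*x orthogonal to e, the vector Tr is orthogonal to e and to Te.  A
   Bessel-type inequality applied to x - Tr with respect to e and Te then
   reads exactly ‖T^*x‖² <= ‖Tx‖². *)

From mathcomp Require Import all_boot all_order all_algebra complex reals.
From mathcomp Require Import ring lra.
Set Implicit Arguments. Unset Strict Implicit. Unset Printing Implicit Defensive.
Import Order.TTheory GRing.Theory Num.Theory.
Local Open Scope ring_scope.

Lemma subspace_dim1 (R : realType) (V : lmodType R[i]) (M : V -> Prop) :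
  subspace_dim M 1 -> exists2 b : V, b != 0 & forall x, M x <-> exists k, x = k *: b.
Proof.
move=> [b [bspan bfree]]; exists (b ord0).
  apply/eqP => b0; have := bfree (fun _ => 1); rewrite big_ord1 scale1r.
  by move=> /(_ b0 ord0) /eqP; rewrite oner_eq0.
move=> x; rewrite bspan; split=> [[c ->]|[k ->]].
  by exists (c ord0); rewrite big_ord1.
by exists (fun _ => k); rewrite big_ord1.
Qed.

Section InnerProductSpace.
Variables (R : realType) (V : lmodType R[i]) (ip : V -> V -> R[i]).
Hypothesis ipZDl : forall (a : R[i]) (x y z : V), ip (a *: x + y) z = a * ip x z + ip y z.
Hypothesis ip_sym : forall x y : V, ip y x = (ip x y)^*.
Hypothesis ip_ge0 : forall x : V, 0 <= ip x x.
Hypothesis ip_eq0 : forall x : V, ip x x = 0 -> x = 0.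

Lemma ip0l z : ip 0 z = 0.
Proof.
have := ipZDl 1 0 0 z; rewrite scaler0 addr0 mul1r.
by rewrite -{1}[ip 0 z]addr0 => /addrI ->.
Qed.

Lemma ipDl x y z : ip (x + y) z = ip x z + ip y z.
Proof. by have := ipZDl 1 x y z; rewrite scale1r mul1r. Qed.

Lemma ipZl a x z : ip (a *: x) z = a * ip x z.
Proof. by have := ipZDl a x 0 z; rewrite !addr0 ip0l addr0. Qed.

Lemma ipBl x y z : ip (x - y) z = ip x z - ip y z.
Proof. by rewrite ipDl -scaleN1r ipZl mulN1r. Qed.

Lemma ip0r z : ip z 0 = 0.
Proof. by rewrite ip_sym ip0l conjC0. Qed.

Lemma ipDr x y z : ip z (x + y) = ip z x + ip z y.
Proof. by rewrite ip_sym ipDl rmorphD /= -!ip_sym. Qed.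

Lemma ipZr a x z : ip z (a *: x) = a^* * ip z x.
Proof. by rewrite ip_sym ipZl rmorphM /= -ip_sym. Qed.

Lemma ipBr x y z : ip z (x - y) = ip z x - ip z y.
Proof. by rewrite ip_sym ipBl rmorphB /= -!ip_sym. Qed.

Lemma ipZr_eq0 a x z : a != 0 -> (ip z (a *: x) == 0) = (ip z x == 0).
Proof. by move=> a0; rewrite ipZr mulf_eq0 conjC_eq0 (negPf a0). Qed.

Lemma ip_selfJ x : (ip x x)^* = ip x x.
Proof. exact: geC0_conj. Qed.

Lemma hnorm_ge0 x : 0 <= hnorm ip x.
Proof. exact: sqrtr_ge0. Qed.

Lemma hnorm0 : hnorm ip 0 = 0.
Proof. by rewrite /hnorm ip0l /= sqrtr0. Qed.

Lemma hnorm_sqr x : (hnorm ip x ^+ 2)%:C%C = ip x x.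
Proof.
have ip_real := RRe_real (ger0_real (ip_ge0 x)).
by rewrite sqr_sqrtr ?ip_real // -ler0c ip_real.
Qed.

Lemma hnorm_le x y : (hnorm ip x <= hnorm ip y) = (ip x x <= ip y y).
Proof.
by rewrite -(ler_pXn2r (_ : 0 < 2)%N) ?nnegrE ?hnorm_ge0 // -lecR !hnorm_sqr.
Qed.

Lemma ip_self_decomp x e : ip e e = 1 ->
  ip x x = ip (x - ip x e *: e) (x - ip x e *: e) + ip x e * (ip x e)^*.
Proof. by move=> e_unit; rewrite !ipBl !ipBr !ipZl !ipZr e_unit (ip_sym x e); ring. Qed.

Lemma ip_proj_orth x e : ip e e = 1 -> ip (x - ip x e *: e) e = 0.
Proof. by move=> e_unit; rewrite ipBl ipZl e_unit mulr1 subrr. Qed.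

Lemma cauchy_schwarz_sqr x y : ip x y * (ip x y)^* <= ip x x * ip y y.
Proof.
have [y0|ny0] := eqVneq (ip y y) 0.
  by rewrite (ip_eq0 y0) !ip0r mul0r mulr0.
set d := ip x y; set t := d / ip y y.
have E : ip x x * ip y y - d * d^* = ip y y * ip (x - t *: y) (x - t *: y).
  rewrite !ipBl !ipBr !ipZl !ipZr -/d (ip_sym x y) -/d /t rmorphM fmorphV /=.
  by rewrite ip_selfJ; field.
by rewrite -subr_ge0 E mulr_ge0.
Qed.

Lemma cauchy_schwarz x y : `|ip x y| <= (hnorm ip x * hnorm ip y)%:C%C.
Proof.
rewrite -(ler_pXn2r (_ : 0 < 2)%N) ?nnegrE ?normr_ge0 ?ler0c ?mulr_ge0 ?hnorm_ge0 //.
rewrite normCK -(rmorphXn (real_complex R)) /= exprMn rmorphM /= !hnorm_sqr.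
exact: cauchy_schwarz_sqr.
Qed.

(* Write y = b e + y' and f = g e + f' with y', f' orthogonal to e; the defect
   of the inequality is ‖b f' - g y'‖² + ‖y'‖²(1 - ‖f‖²) plus the
   Cauchy-Schwarz defect of y' and f'. *)
Lemma bessel_subunit y e f : ip e e = 1 -> ip f f <= 1 ->
  ip y f * (ip y f)^* + (1 - ip f f) * (ip y e * (ip y e)^*) <= ip y y.
Proof.
move=> e_unit f_le1; rewrite -subr_ge0.
have yfE : ip y f = ip (y - ip y e *: e) (f - ip f e *: e) + ip y e * (ip f e)^*.
  by rewrite !ipBl !ipBr !ipZl !ipZr e_unit (ip_sym f e); ring.
rewrite yfE (ip_self_decomp y e_unit).
rewrite (ip_self_decomp f e_unit) in f_le1 *.
move: (y - _) (f - _) f_le1 => y' f'; move: (ip y e) (ip f e) => b g f_le1.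
have -> : ip y' y' + b * b^* - ((ip y' f' + b * g^*) * (ip y' f' + b * g^*)^*
                                + (1 - (ip f' f' + g * g^*)) * (b * b^*)) =
    ip (b *: f' - g *: y') (b *: f' - g *: y') + ip y' y' * (1 - (ip f' f' + g * g^*))
    + (ip y' y' * ip f' f' - ip y' f' * (ip y' f')^*).
  rewrite !ipBl !ipBr !ipZl !ipZr (ip_sym y' f') rmorphD rmorphM /= conjCK; ring.
apply: addr_ge0; last by rewrite subr_ge0 cauchy_schwarz_sqr.
by rewrite addr_ge0 ?mulr_ge0 ?subr_ge0 ?ip_ge0.
Qed.

Lemma closure_orth (M : V -> Prop) z x :
  (forall a, M a -> ip a z = 0) -> closure_of ip M x -> ip x z = 0.
Proof.
move=> Mz clx; apply/normr0_eq0/eqP; rewrite eq_le normr_ge0 andbT.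
apply/ler_addgt0Pr => e e_gt0; rewrite add0r -(RRe_real (gtr0_real e_gt0)).
have eR_gt0 : 0 < complex.Re e by rewrite -ltcR RRe_real ?gtr0_real.
have nz1_gt0 : 0 < hnorm ip z + 1 by rewrite ltr_wpDl ?hnorm_ge0.
have [a [Ma xa_lt]] := clx _ (divr_gt0 eR_gt0 nz1_gt0).
have xzE : ip x z = ip (x - a) z by rewrite ipBl (Mz a Ma) subr0.
rewrite xzE (le_trans (cauchy_schwarz _ _)) // lecR.
rewrite ltr_pdivlMr // in xa_lt.
have := hnorm_ge0 (x - a); have := hnorm_ge0 z; nra.
Qed.

Lemma selfadj_eq0 S x : is_adjoint ip S S -> ip (S (S x)) x = 0 -> S x = 0.
Proof. by move=> Sadj SSx; apply: ip_eq0; rewrite -Sadj. Qed.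

Lemma adjoint_sym A A' : is_adjoint ip A A' -> is_adjoint ip A' A.
Proof. by move=> adjA x y; rewrite ip_sym -adjA -ip_sym. Qed.

Lemma range_sub_defect_space A A' S w :
  is_pos_sqrt ip (fun v => v - A' (A v)) S -> defect_space ip A A' (S w).
Proof.
move=> Ssqrt; exists S; split=> // eps eps_gt0.
by exists (S w); split; [exists w | rewrite subrr hnorm0].
Qed.

Lemma orth_defect_fixed A A' S x :
  is_pos_sqrt ip (fun v => v - A' (A v)) S ->
  (forall y, defect_space ip A A' y -> ip x y = 0) -> A' (A x) = x.
Proof.
move=> Ssqrt xD; have [Sadj _ SS] := Ssqrt.
have Sx0 : S x = 0.
  apply: selfadj_eq0; rewrite // ip_sym xD ?conjC0 //.
  exact: range_sub_defect_space.
have S00 : S 0 = 0 by apply: selfadj_eq0; rewrite // ip0r.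
by apply/eqP; rewrite eq_sym -subr_eq0 -SS Sx0 S00.
Qed.

Lemma fixed_orth_defect A A' z y :
  A (A' z) = z -> defect_space ip A' A y -> ip z y = 0.
Proof.
move=> Az [S [[Sadj _ SS] cly]].
have Sz0 : S z = 0 by apply: selfadj_eq0; rewrite // SS Az subrr ip0l.
rewrite ip_sym (closure_orth _ cly) ?conjC0 // => _ [w ->].
by rewrite Sadj Sz0 ip0r.
Qed.

Lemma unit_scale x : x != 0 -> exists2 a : R[i], a != 0 & ip (a *: x) (a *: x) = 1.
Proof.
move=> x0; have n0 : hnorm ip x != 0.
  apply: contra x0 => /eqP n0; apply/eqP/ip_eq0.
  by rewrite -hnorm_sqr n0 expr0n.
exists (hnorm ip x)^-1%:C%C; first by rewrite eq_complex /= invr_eq0 (negPf n0).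
rewrite ipZl ipZr -hnorm_sqr geC0_conj ?ler0c ?invr_ge0 ?hnorm_ge0 //.
by rewrite -!rmorphM /= mulrA -expr2 -exprMn mulVf ?expr1n.
Qed.

Section AdjointPair.
Variables (T : {linear V -> V}) (T' : V -> V).
Hypothesis adjT : is_adjoint ip T T'.

Section UnitDefect.
Variable e : V.
Hypothesis e_unit : ip e e = 1.
Hypothesis Te_le1 : ip (T e) (T e) <= 1.
Hypothesis orth_isometric : forall r, ip r e = 0 -> T' (T r) = r.
Hypothesis fixed_orth : forall z, T (T' z) = z -> ip z e = 0.

Lemma adjoint_image_unit : T' (T e) = ip (T e) (T e) *: e.
Proof.
set s := T' (T e) - ip (T' (T e)) e *: e.
have se : ip s e = 0 by exact: ip_proj_orth.
have ss : ip s s = 0.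
  rewrite {2}/s ipBr ipZr se mulr0 subr0 -adjT -(adjoint_sym adjT).
  by rewrite orth_isometric.
have := ip_eq0 ss; rewrite /s (adjoint_sym adjT) => /eqP.
by rewrite subr_eq0 => /eqP.
Qed.

Lemma sqnorm_image x :
  ip (T x) (T x) = ip x x - (1 - ip (T e) (T e)) * (ip x e * (ip x e)^*).
Proof.
rewrite (ip_self_decomp x e_unit).
have x1e := ip_proj_orth x e_unit.
have -> : T x = ip x e *: T e + T (x - ip x e *: e).
  by rewrite -linearZ -linearD addrC subrK.
move: (ip x e) (x - ip x e *: e) x1e => b x1 x1e.
have x1f : ip (T x1) (T e) = 0 by rewrite adjT adjoint_image_unit ipZr x1e mulr0.
rewrite ipDl !ipDr !ipZl !ipZr (ip_sym (T x1) (T e)) x1f conjC0 (adjT x1).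
by rewrite orth_isometric //; ring.
Qed.

Lemma hyponormal_of_unit_defect : hyponormal ip T T'.
Proof.
move=> x; rewrite ipBl (adjoint_sym adjT) (adjT (T' x)) sqnorm_image.
pose g := ip x (T e).
have [r T'xE re] : exists2 r, T' x = g *: e + r & ip r e = 0.
  exists (T' x - g *: e); first by rewrite addrC subrK.
  by rewrite ipBl ipZl e_unit mulr1 (adjoint_sym adjT) subrr.
have Tr_e : ip (T r) e = 0 by apply: fixed_orth; rewrite orth_isometric.
have Tr_Te : ip (T r) (T e) = 0 by rewrite adjT adjoint_image_unit ipZr re mulr0.
have x_Tr : ip x (T r) = ip r r.
  by rewrite -(adjoint_sym adjT) T'xE ipDl ipZl (ip_sym r e) re conjC0 mulr0 add0r.
have Tr_x : ip (T r) x = ip r r by rewrite ip_sym x_Tr ip_selfJ.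
have Tr_Tr : ip (T r) (T r) = ip r r by rewrite adjT orth_isometric.
have := bessel_subunit (x - T r) e_unit Te_le1.
rewrite !ipBl !ipBr Tr_e Tr_Te x_Tr Tr_x Tr_Tr !subr0 -/g -subr_ge0.
rewrite T'xE ipDl !ipDr !ipZl !ipZr e_unit (ip_sym r e) re conjC0.
by congr (_ <= _); ring.
Qed.

End UnitDefect.

Lemma hyponormal_of_defect_line :
  contraction ip T ->
  (forall x, defect_space ip T T' x -> defect_space ip T' T x) ->
  subspace_dim (defect_space ip T T') 1 -> hyponormal ip T T'.
Proof.
move=> contrT sub_defect /subspace_dim1[b b0 Dspan].
have Db : defect_space ip T T' b by apply/Dspan; exists 1; rewrite scale1r.
have [S [Ssqrt _]] := Db.
have [a a0 e_unit] := unit_scale b0.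
apply: (hyponormal_of_unit_defect e_unit).
- by rewrite -e_unit -hnorm_le contrT.
- move=> r /eqP; rewrite ipZr_eq0 // => /eqP rb.
  apply: (orth_defect_fixed Ssqrt) => _ /Dspan[k ->].
  by rewrite ipZr rb mulr0.
- move=> z Tz; apply/eqP; rewrite ipZr_eq0 //; apply/eqP.
  exact: fixed_orth_defect Tz (sub_defect _ Db).
Qed.

End AdjointPair.

End InnerProductSpace.

Theorem corollary3p7 (R : realType) (V : lmodType R[i]) (ip : V -> V -> R[i])
    (T : {linear V -> V}) (T' : V -> V) :
  hilbert_space ip ->
  is_adjoint ip T T' ->
  contraction ip T ->
  completely_non_unitary ip T T' ->
  finite_dimensional (defect_space ip T T') ->
  finite_dimensional (defect_space ip T' T) ->
  (forall x, defect_space ip T T' x -> defect_space ip T' T x) ->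
  subspace_dim (defect_space ip T T') 1 ->
  hyponormal ip T T'.
Proof.
case=> ipZDl ip_sym ip_ge0 ip_eq0 _ adjT contrT _ _ _.
exact: hyponormal_of_defect_line.
Qed.
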